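(* Let $A,B \in M_n(\mathbb{R}_+)$ be two triangularizable matrices. If $G_A \subseteq G_B$ or $G_B \subseteq G_A$, then $A$ and $B$ are simultaneously triangularizable.
   Context: Max algebra: $\mathbb{R}_+$ the nonnegative reals with $a\oplus b=\max\{a,b\}$ and ordinary multiplication; for $A,B\in M_n(\mathbb{R}_+)$, $(AB)_{ij}=\max_k a_{ik}b_{kj}$. $GL_n(\mathbb{R}_+)$ is the set of matrices invertible under this product (the generalized permutation matrices). $A$ is triangularizable if $P^{-1}AP$ is upper triangular for some $P\in GL_n(\mathbb{R}_+)$; $A,B$ are simultaneously triangularizable if a single $P\in GL_n(\mathbb{R}_+)$ makes both $P^{-1}AP$ and $P^{-1}BP$ upper triangular. The digraph $G_A$ has vertices $\{1,\dots,n\}$ and an edge $i\to j$ iff $a_{ij}>0$; $G_A\subseteq G_B$ means every edge of $G_A$ is an edge of $G_B$. *)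

From HB Require Import structures.
From mathcomp Require Import all_boot all_order all_algebra.
From mathcomp Require Import reals.
Set Implicit Arguments. Unset Strict Implicit. Unset Printing Implicit Defensive.
Import Order.TTheory GRing.Theory Num.Theory.
Local Open Scope ring_scope.

Section MaxAlgebra.
Variables (R : realType) (n : nat).

Definition nonneg_mx (A : 'M[R]_n) : Prop := forall i j, 0 <= A i j.

(* Max-algebra product: (A (x) B)_ij = max_k a_ik b_kj  (0 is the max-unit on R_+). *)
Definition maxmul (A B : 'M[R]_n) : 'M[R]_n :=
  \matrix_(i, j) \big[Num.max/0]_(k < n) (A i k * B k j).

Definition maxid : 'M[R]_n := 1%:M.

Definition max_inverse (P Q : 'M[R]_n) : Prop :=
  [/\ nonneg_mx P, nonneg_mx Q, maxmul P Q = maxid & maxmul Q P = maxid].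

Definition max_GL (P : 'M[R]_n) : Prop := exists Q, max_inverse P Q.

Definition upper_triangular (A : 'M[R]_n) : Prop :=
  forall i j : 'I_n, (j < i)%N -> A i j = 0.

Definition max_triangularizable (A : 'M[R]_n) : Prop :=
  exists P Q, max_inverse P Q /\ upper_triangular (maxmul (maxmul Q A) P).

Definition simult_triangularizable (A B : 'M[R]_n) : Prop :=
  exists P Q, max_inverse P Q /\
    upper_triangular (maxmul (maxmul Q A) P) /\
    upper_triangular (maxmul (maxmul Q B) P).

(* G_A subset G_B : every edge i -> j of G_A (a_ij > 0) is an edge of G_B. *)
Definition digraph_sub (A B : 'M[R]_n) : Prop :=
  forall i j, 0 < A i j -> 0 < B i j.

End MaxAlgebra.

From HB Require Import structures.
From mathcomp Require Import all_boot all_order all_algebra.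
From mathcomp Require Import reals.
Set Implicit Arguments. Unset Strict Implicit. Unset Printing Implicit Defensive.
Import Order.TTheory GRing.Theory Num.Theory.
Local Open Scope ring_scope.

(* Over R_+ an entry of a max-product is positive exactly when some path of
   length two through positive entries exists, so the digraph of a product
   depends monotonically on the digraphs of the factors.  Hence if
   G_A ⊆ G_B and P triangularizes B, then G(P^-1 A P) ⊆ G(P^-1 B P), and the
   zeros below the diagonal of P^-1 B P are zeros of P^-1 A P as well: the
   matrix with the larger digraph can be triangularized alone, and its
   triangularizer serves for both. *)

Section MaxAlgebraDigraphs.
Variables (R : realType) (n : nat).
Implicit Types A B C D P Q : 'M[R]_n.

Lemma bigmax0_gt0P (I : finType) (F : I -> R) :
  reflect (exists i, 0 < F i) (0 < \big[Num.max/0]_i F i).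
Proof.
apply: (iffP idP) => [max_gt0|[i Fi_gt0]].
  have [i Fi_gt0|F_le0] := pickP (fun i => 0 < F i); first by exists i.
  move: max_gt0; rewrite ltNge bigmax_le // => i _.
  by rewrite leNgt F_le0.
exact: lt_le_trans (le_bigmax _ _ i).
Qed.

Lemma maxmul_ge0 A B : nonneg_mx (maxmul A B).
Proof. by move=> i j; rewrite mxE bigmax_ge_id. Qed.

Lemma maxmul_gt0P A B i j :
  reflect (exists k, 0 < A i k * B k j) (0 < maxmul A B i j).
Proof. by rewrite mxE; apply: bigmax0_gt0P. Qed.

Lemma digraph_sub_maxmul A A' B B' :
  nonneg_mx A -> nonneg_mx B -> digraph_sub A A' -> digraph_sub B B' ->
  digraph_sub (maxmul A B) (maxmul A' B').
Proof.
move=> A_ge0 B_ge0 sAA' sBB' i j /maxmul_gt0P[k].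
rewrite mulr_ge0_gt0 // => /andP[Aik_gt0 Bkj_gt0].
by apply/maxmul_gt0P; exists k; rewrite mulr_gt0 ?sAA' ?sBB'.
Qed.

Lemma upper_triangular_digraph_sub C D :
  nonneg_mx C -> digraph_sub C D -> upper_triangular D -> upper_triangular C.
Proof.
move=> C_ge0 sCD D_ut i j lt_ji; apply/eqP; rewrite eq_le C_ge0 andbT leNgt.
by apply/negP => /sCD; rewrite D_ut // ltxx.
Qed.

Lemma digraph_sub_maxconj A B P Q :
  nonneg_mx A -> nonneg_mx P -> nonneg_mx Q -> digraph_sub A B ->
  digraph_sub (maxmul (maxmul Q A) P) (maxmul (maxmul Q B) P).
Proof.
move=> A_ge0 P_ge0 Q_ge0 sAB.
apply: digraph_sub_maxmul => //; first exact: maxmul_ge0.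
exact: digraph_sub_maxmul Q_ge0 A_ge0 (fun _ _ => id) sAB.
Qed.

Lemma simult_triangularizable_digraph_sub A B :
  nonneg_mx A -> max_triangularizable B -> digraph_sub A B ->
  simult_triangularizable A B.
Proof.
move=> A_ge0 [P [Q [PQ QBP_ut]]] sAB; exists P, Q; split=> //; split=> //.
have [P_ge0 Q_ge0 _ _] := PQ.
apply: upper_triangular_digraph_sub QBP_ut; first exact: maxmul_ge0.
exact: digraph_sub_maxconj.
Qed.

Lemma simult_triangularizable_sym A B :
  simult_triangularizable A B -> simult_triangularizable B A.
Proof. by move=> [P [Q [PQ [A_ut B_ut]]]]; exists P, Q. Qed.

End MaxAlgebraDigraphs.

Theorem corollary3p4 (R : realType) (n : nat) (A B : 'M[R]_n) :
  nonneg_mx A -> nonneg_mx B ->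
  max_triangularizable A -> max_triangularizable B ->
  digraph_sub A B \/ digraph_sub B A ->
  simult_triangularizable A B.
Proof.
move=> A_ge0 B_ge0 A_tr B_tr [sAB|sBA].
  exact: simult_triangularizable_digraph_sub.
exact/simult_triangularizable_sym/simult_triangularizable_digraph_sub.
Qed.
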